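(* Let $n\ge1$, $k\ge1$, and let $D_{n,k}:B_{n+k}\to B_n$ be the homomorphism of binary De Bruijn digraphs induced by a Boolean function $d_k(x_1,\ldots,x_{k+1})$. Then $D_{n,k}$ has property (D) if and only if $$d_k(x_1,\ldots,x_{k+1})=x_1+h(x_2,\ldots,x_k)+x_{k+1}\pmod 2$$ for some Boolean function $h$ of the $k-1$ variables $x_2,\ldots,x_k$ (a constant when $k=1$).
   Context: $B_m=B_m(2)$ is the binary De Bruijn digraph with vertex set $\{0,1\}^m$ and an edge from $(x_1,\ldots,x_m)$ to $(y_1,\ldots,y_m)$ iff $y_i=x_{i+1}$ for $i=1,\ldots,m-1$. The homomorphism induced by $d_k$ is $D_{n,k}(x_1,\ldots,x_{n+k})=(d_k(x_1,\ldots,x_{k+1}),\ldots,d_k(x_n,\ldots,x_{n+k}))$. A cycle of length $l$ in $B_n$ is a cyclic sequence $[c_1,\ldots,c_l]$ with vertices the windows $(c_j,\ldots,c_{j+n-1})$, indices mod $l$; it is vertex-disjoint if these windows are distinct. Property (D): for every vertex-disjoint cycle $[c_1,\ldots,c_l]$ in $B_n$ and every $w\in\{0,1\}^k$ there is exactly one sequence $(x_1,\ldots,x_{k+l+n-1})$ with $(x_1,\ldots,x_k)=w$ and $d_k(x_j,\ldots,x_{j+k})=c_j$ (index of $c$ mod $l$) for $j=1,\ldots,l+n-1$; and over all $2^k$ choices of $w$ the $2^k l$ words $(x_j,\ldots,x_{j+n+k-1})$, $j=1,\ldots,l$, are pairwise distinct. *)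

From mathcomp Require Import all_boot.
Set Implicit Arguments. Unset Strict Implicit. Unset Printing Implicit Defensive.

(* Conventions: everything is 0-indexed.  A cyclic sequence
   [c_1,...,c_l] is a seq bool c of size l > 0, with c_j read as
   nth false c (j mod l). *)

(* the j-th vertex (window of length n) of the cycle c in B_n, j < size c *)
Definition cycle_window (n : nat) (c : seq bool) (j : nat) : seq bool :=
  [seq nth false c ((j + i) %% size c) | i <- iota 0 n].

Definition vertex_disjoint (n : nat) (c : seq bool) : bool :=
  uniq [seq cycle_window n c j | j <- iota 0 (size c)].

Definition dwin (k : nat) (x : seq bool) (j : nat) : k.+1.-tuple bool :=
  [tuple nth false x (j + i) | i < k.+1].

Definition admissible (n k : nat) (d : k.+1.-tuple bool -> bool)
    (c : seq bool) (w : seq bool) (x : seq bool) : Prop :=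
  [/\ size x = k + size c + n - 1,
      take k x = w &
      forall j, j < size c + n - 1 -> d (dwin k x j) = nth false c (j %% size c)].

Definition xword (n k : nat) (x : seq bool) (j : nat) : seq bool :=
  take (n + k) (drop j x).

Definition propD (n k : nat) (d : k.+1.-tuple bool -> bool) : Prop :=
  forall c : seq bool, 0 < size c -> vertex_disjoint n c ->
    (forall w : seq bool, size w = k -> exists! x, admissible n d c w x) /\
    (forall (w1 w2 x1 x2 : seq bool) (j1 j2 : nat),
        size w1 = k -> size w2 = k ->
        admissible n d c w1 x1 -> admissible n d c w2 x2 ->
        j1 < size c -> j2 < size c ->
        xword n k x1 j1 = xword n k x2 j2 -> w1 = w2 /\ j1 = j2).

(* Call d right permutive when the last argument of d is determined by the
   first k arguments together with the value of d, and left permutive when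
   the first argument is determined by the last k arguments and the value.
   Over bool this means that d is an xor with its last (resp. first)
   variable, so d has the normal form x_1 + h(x_2..x_k) + x_{k+1} exactly
   when it is both left and right permutive (Section Permutive).

   Property (D) is then shown to be equivalent to permutivity.
   - Sufficiency (Section Admissible): by right permutivity an admissible
     sequence is computed letter by letter from its first k letters, which
     gives existence and uniqueness, and any k consecutive letters determine
     all later ones; by left permutivity they also determine the earlier
     ones.  So two equal words x_j..x_{j+n+k-1} come from equal windows of
     the cycle (hence equal j, by vertex-disjointness) and then from equal
     prefixes w.
   - Necessity (Section Necessity): cycles of length 1 force right
     permutivity, and the cycle [b, ~b] of length 2 together with the
     distinctness of words forces left permutivity. *)
From mathcomp Require Import all_boot zify.
Set Implicit Arguments. Unset Strict Implicit. Unset Printing Implicit Defensive.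

Lemma nth_tnth (m : nat) (t : m.-tuple bool) j (hj : j < m) :
  nth false t j = tnth t (Ordinal hj).
Proof. by rewrite (tnth_nth false). Qed.

Section Permutive.
Variable k : nat.
Implicit Types t u x : k.+1.-tuple bool.

Definition agree_init t u := forall i : 'I_k.+1, i < k -> tnth t i = tnth u i.
Definition agree_tail t u := forall i : 'I_k.+1, 0 < i -> tnth t i = tnth u i.

Definition right_permutive (d : k.+1.-tuple bool -> bool) :=
  forall t u, agree_init t u -> d t = d u -> tnth t ord_max = tnth u ord_max.
Definition left_permutive (d : k.+1.-tuple bool -> bool) :=
  forall t u, agree_tail t u -> d t = d u -> tnth t ord0 = tnth u ord0.

Definition middle x : k.-1.-tuple bool := [tuple nth false x i.+1 | i < k.-1].

Lemma agree_init_sym t u : agree_init t u -> agree_init u t.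
Proof. by move=> H i hi; rewrite H. Qed.

Lemma agree_init_trans t u x : agree_init t u -> agree_init u x -> agree_init t x.
Proof. by move=> H1 H2 i hi; rewrite H1 ?H2. Qed.

Lemma eq_tuple_init t u : agree_init t u -> tnth t ord_max = tnth u ord_max -> t = u.
Proof.
move=> H Hmax; apply: eq_from_tnth => i; case: (ltnP i k) => [|hi]; first exact: H.
by have -> : i = ord_max by apply/val_inj => /=; have := ltn_ord i; lia.
Qed.

Lemma eq_tuple_tail t u : agree_tail t u -> tnth t ord0 = tnth u ord0 -> t = u.
Proof.
move=> H H0; apply: eq_from_tnth => i; case: (posnP i) => [hi|]; last exact: H.
by have -> : i = ord0 by apply/val_inj.
Qed.

Lemma middle_init t u : agree_init t u -> middle t = middle u.
Proof.
move=> H; apply: eq_from_tnth => i; rewrite !tnth_mktuple.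
have hi : i.+1 < k.+1 by have := ltn_ord i; lia.
by rewrite !(nth_tnth _ hi) H //=; have := ltn_ord i; lia.
Qed.

Lemma middle_tail t u : agree_tail t u -> middle t = middle u.
Proof.
move=> H; apply: eq_from_tnth => i; rewrite !tnth_mktuple.
have hi : i.+1 < k.+1 by have := ltn_ord i; lia.
by rewrite !(nth_tnth _ hi) H.
Qed.

Variable d : k.+1.-tuple bool -> bool.

(* Over bool, right permutivity says that d is an xor with its last variable. *)
Lemma right_permutive_xor : right_permutive d ->
  forall t u, agree_init t u -> d t (+) tnth t ord_max = d u (+) tnth u ord_max.
Proof.
move=> Hr t u Htu; case: (eqVneq (tnth t ord_max) (tnth u ord_max)) => [el|nel].
  by rewrite (eq_tuple_init Htu el).
have nd := contra_neq (Hr t u Htu) nel.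
by move: nel nd; case: (d t); case: (d u); case: (tnth t _); case: (tnth u _).
Qed.

(* Symmetrically, left permutivity makes d an xor with its first variable. *)
Lemma left_permutive_xor : left_permutive d ->
  forall t u, agree_tail t u -> d t (+) tnth t ord0 = d u (+) tnth u ord0.
Proof.
move=> Hl t u Htu; case: (eqVneq (tnth t ord0) (tnth u ord0)) => [e0|ne0].
  by rewrite (eq_tuple_tail Htu e0).
have nd := contra_neq (Hl t u Htu) ne0.
by move: ne0 nd; case: (d t); case: (d u); case: (tnth t _); case: (tnth u _).
Qed.

Hypothesis k_gt0 : 0 < k.

Lemma normal_form_permutive (h : k.-1.-tuple bool -> bool) :
  (forall x, d x = tnth x ord0 (+) h (middle x) (+) tnth x ord_max) ->
  left_permutive d /\ right_permutive d.
Proof.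
move=> Hd; split=> t u Htu; rewrite !Hd.
  rewrite (middle_tail Htu) (Htu ord_max k_gt0).
  by move/addIb/addIb.
by rewrite (middle_init Htu) (Htu ord0 k_gt0); move/addbI.
Qed.

(* Conversely, h is read off by evaluating d with both outer variables false. *)
Lemma permutive_normal_form : left_permutive d -> right_permutive d ->
  exists h : k.-1.-tuple bool -> bool,
    forall x, d x = tnth x ord0 (+) h (middle x) (+) tnth x ord_max.
Proof.
move=> Hl Hr.
pose frame (m : k.-1.-tuple bool) : k.+1.-tuple bool :=
  [tuple if (i == 0 :> nat) || (i == k :> nat) then false else nth false m i.-1
  | i < k.+1].
exists (fun m => d (frame m)) => x.
pose z : k.+1.-tuple bool := [tuple if i == 0 :> nat then false else tnth x i | i < k.+1].
have Exz : d x (+) tnth x ord0 = d z.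
  rewrite (left_permutive_xor Hl (u := z)); first by rewrite tnth_mktuple addbF.
  by move=> i hi; rewrite tnth_mktuple; case: eqP => // i0; rewrite i0 in hi.
have Ezf : d z (+) tnth x ord_max = d (frame (middle x)).
  have -> : tnth x ord_max = tnth z ord_max.
    by rewrite tnth_mktuple /=; case: eqP => //; lia.
  rewrite (right_permutive_xor Hr (u := frame (middle x))).
    by rewrite tnth_mktuple /= eqxx orbT addbF.
  move=> i hi; rewrite !tnth_mktuple; case: eqP => //= i0.
  have -> : (i == k :> nat) = false by apply/eqP; lia.
  have hi' : i.-1 < k.-1 by lia.
  rewrite (nth_tnth (middle x) hi') tnth_mktuple /=.
  have hi2 : i.-1.+1 < k.+1 by lia.
  rewrite (nth_tnth _ hi2); congr tnth; apply/val_inj => /=; lia.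
rewrite -Ezf -Exz.
by case: (d x); case: (tnth x ord0); case: (tnth x ord_max).
Qed.

End Permutive.

Lemma tnth_dwin k x j (i : 'I_k.+1) : tnth (dwin k x j) i = nth false x (j + i).
Proof. by rewrite tnth_mktuple. Qed.

Lemma nth_xword n k x j i :
  i < n + k -> nth false (xword n k x j) i = nth false x (j + i).
Proof. by move=> hi; rewrite nth_take // nth_drop. Qed.

Lemma vertex_disjoint_inj n c j1 j2 : vertex_disjoint n c ->
  j1 < size c -> j2 < size c -> cycle_window n c j1 = cycle_window n c j2 -> j1 = j2.
Proof.
move=> vd hj1 hj2 ew; apply/eqP.
have := nth_uniq [::] (i := j1) (j := j2) _ _ vd.
rewrite size_map size_iota => /(_ hj1 hj2) <-.
by rewrite !(nth_map 0) ?size_iota // !nth_iota // ew.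
Qed.

Definition agree_on (x y : seq bool) (a b : nat) :=
  forall p, a <= p < b -> nth false x p = nth false y p.

Lemma agree_on_sub x y a b a' b' :
  a <= a' -> b' <= b -> agree_on x y a b -> agree_on x y a' b'.
Proof. by move=> ha hb H p hp; apply: H; lia. Qed.

Lemma agree_on_take x y b : take b x = take b y -> agree_on x y 0 b.
Proof. by move=> e p /andP [_ hp]; rewrite -(nth_take false hp) e nth_take. Qed.

Lemma take_agree_on x y b :
  size x = size y -> agree_on x y 0 b -> take b x = take b y.
Proof.
move=> sxy H; apply: (@eq_from_nth _ false); first by rewrite !size_take sxy.
by move=> i; rewrite size_take_min => hi; rewrite !nth_take ?H //; lia.
Qed.

Lemma dwin_agree_init k x y j :
  agree_on x y j (j + k) -> agree_init (dwin k x j) (dwin k y j).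
Proof. by move=> H i hi; rewrite !tnth_dwin H //; lia. Qed.

Lemma dwin_agree_tail k x y j :
  agree_on x y j.+1 (j + k).+1 -> agree_tail (dwin k x j) (dwin k y j).
Proof. by move=> H i hi; rewrite !tnth_dwin H //; have := ltn_ord i; lia. Qed.

Lemma dwin_agree k x y j : agree_on x y j (j + k).+1 -> dwin k x j = dwin k y j.
Proof.
by move=> H; apply: eq_from_tnth => i; rewrite !tnth_dwin H //; have := ltn_ord i; lia.
Qed.

Lemma agree_on_extend_right x y a b :
  agree_on x y a b -> nth false x b = nth false y b -> agree_on x y a b.+1.
Proof.
move=> H eb p hp; case: (ltnP p b) => hpb; first by apply: H; lia.
by have -> : p = b by lia.
Qed.

Lemma agree_on_extend_left x y a b :
  nth false x a = nth false y a -> agree_on x y a.+1 b -> agree_on x y a b.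
Proof.
move=> ea H p hp; case: (ltnP a p) => hap; first by apply: H; lia.
by have -> : p = a by lia.
Qed.

Lemma xword_agree_on n k x y j : size x = size y ->
  agree_on x y j (j + (n + k)) -> xword n k x j = xword n k y j.
Proof.
move=> sxy H; apply: take_agree_on; first by rewrite !size_drop sxy.
by move=> p hp; rewrite !nth_drop H //; lia.
Qed.

Lemma eq_of_agree_on x y : size x = size y -> agree_on x y 0 (size x) -> x = y.
Proof.
by move=> sxy H; rewrite -(take_size x) -[y](take_size y) -sxy; apply: take_agree_on.
Qed.

Section Admissible.
Variables (n k : nat) (d : k.+1.-tuple bool -> bool) (c : seq bool).

Local Notation steps := (size c + n - 1).

Lemma size_admissible w x : 0 < size c -> admissible n d c w x -> size x = k + steps.
Proof. by move=> hc [sx _ _]; rewrite sx; lia. Qed.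

Section Propagation.
Variables (x y w1 w2 : seq bool).
Hypotheses (adm_x : admissible n d c w1 x) (adm_y : admissible n d c w2 y).

Lemma admissible_same_image j : j < steps -> d (dwin k x j) = d (dwin k y j).
Proof. by case: adm_x adm_y => _ _ ex [_ _ ey] hj; rewrite ex ?ey. Qed.

Lemma agree_forward a : right_permutive d -> a <= steps ->
  agree_on x y a (a + k) -> agree_on x y a (k + steps).
Proof.
move=> Hr ha Hak.
suff H : forall b, a + b <= steps -> agree_on x y a (a + b + k).
  by apply: agree_on_sub (H (steps - a) _); lia.
elim=> [|b IH] hb; first by rewrite addn0.
have hab : a + b < steps by lia.
have Hb := IH (ltnW hab).
have Hwin : agree_init (dwin k x (a + b)) (dwin k y (a + b)).
  by apply: dwin_agree_init; apply: agree_on_sub Hb; lia.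
have := Hr _ _ Hwin (admissible_same_image hab); rewrite !tnth_dwin /= => el.
by rewrite addnS addSn; apply: agree_on_extend_right.
Qed.

Lemma agree_backward a : left_permutive d -> a <= steps ->
  agree_on x y a (a + k) -> agree_on x y 0 (a + k).
Proof.
move=> Hl ha Hak.
suff H : forall q, q <= a -> agree_on x y (a - q) (a + k).
  by have := H a (leqnn a); rewrite subnn.
elim=> [|q IH] hq; first by rewrite subn0.
have Hq := IH (ltnW hq).
have hj : a - q.+1 < steps by lia.
have ep : (a - q.+1).+1 = a - q by lia.
have Hwin : agree_tail (dwin k x (a - q.+1)) (dwin k y (a - q.+1)).
  by apply: dwin_agree_tail; apply: agree_on_sub Hq; lia.
have := Hl _ _ Hwin (admissible_same_image hj).
  rewrite !tnth_dwin /= addn0 => e0.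
by apply: agree_on_extend_left; rewrite ?ep.
Qed.

Lemma agree_everywhere a : left_permutive d -> right_permutive d -> a <= steps ->
  agree_on x y a (a + k) -> agree_on x y 0 (k + steps).
Proof.
move=> Hl Hr ha Hak p hp; case: (ltnP p (a + k)) => hpa.
  by apply: (agree_backward Hl ha Hak); lia.
by apply: (agree_forward Hr ha Hak); lia.
Qed.

Lemma admissible_unique : 0 < size c -> right_permutive d -> w1 = w2 -> x = y.
Proof.
move=> hc Hr ew; have [_ tx _] := adm_x; have [_ ty _] := adm_y.
have H0 : agree_on x y 0 (0 + k) by apply: agree_on_take; rewrite tx ty.
have sxy : size x = size y.
  by rewrite (size_admissible hc adm_x) (size_admissible hc adm_y).
apply: eq_of_agree_on => //.
by rewrite (size_admissible hc adm_x); apply: agree_forward H0.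
Qed.

Lemma admissible_prefix_eq a :
  0 < size c -> left_permutive d -> right_permutive d -> a <= steps ->
  agree_on x y a (a + k) -> w1 = w2.
Proof.
move=> hc Hl Hr ha Hak; have [_ <- _] := adm_x; have [_ <- _] := adm_y.
have sxy : size x = size y.
  by rewrite (size_admissible hc adm_x) (size_admissible hc adm_y).
apply: take_agree_on => //.
by apply: agree_on_sub (agree_everywhere Hl Hr ha Hak) => //; lia.
Qed.

End Propagation.

Section Extension.
Hypothesis Hr : right_permutive d.

(* extend w m appends m letters to w, the letter at position size w + j being
   chosen so that the window at j has the image c_j *)
Fixpoint extend (w : seq bool) (m : nat) : seq bool :=
  if m is j.+1 then
    let s := extend w j in
    rcons s (nth false c (j %% size c) (+) d (dwin k (rcons s false) j))
  else w.

Lemma size_extend w m : size (extend w m) = size w + m.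
Proof. by elim: m => [|m IH] /=; rewrite ?addn0 // size_rcons IH addnS. Qed.

Lemma extend_prefix w m : take (size w) (extend w m) = w.
Proof.
elim: m => [|m IH] /=; first exact: take_size.
by rewrite -cats1 takel_cat ?IH // size_extend leq_addr.
Qed.

Lemma nth_extend w m m' p : m <= m' -> p < size w + m ->
  nth false (extend w m') p = nth false (extend w m) p.
Proof.
elim: m' => [|m' IH] hm hp; first by have -> : m = 0 by lia.
case: (ltnP m m'.+1) => hmm; last by have -> : m = m'.+1 by lia.
by rewrite /= nth_rcons size_extend (_ : p < size w + m' = true) ?IH //; lia.
Qed.

Lemma extend_window w j : size w = k ->
  d (dwin k (extend w j.+1) j) = nth false c (j %% size c).
Proof.
move=> sw /=; set s := extend w j; set b := _ (+) _.
have ss : size s = j + k by rewrite size_extend sw addnC.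
have Hwin : agree_init (dwin k (rcons s b) j) (dwin k (rcons s false) j).
  by move=> i hi; rewrite !tnth_dwin !nth_rcons ss (_ : j + i < j + k = true) //; lia.
have := right_permutive_xor Hr Hwin; rewrite !tnth_dwin !nth_rcons ss ltnn eqxx.
by rewrite /b; case: (d _); case: (d _); case: (nth _ _ _).
Qed.

Lemma extend_admissible w : 0 < size c -> size w = k ->
  admissible n d c w (extend w steps).
Proof.
move=> hc sw; split; first by rewrite size_extend sw; lia.
  by rewrite -sw extend_prefix.
move=> j hj; rewrite -(extend_window j sw); congr d; apply: dwin_agree => p hp.
by rewrite (nth_extend (_ : j.+1 <= steps)) //; lia.
Qed.

End Extension.

Lemma cycle_window_admissible w x j : admissible n d c w x -> j < size c ->
  cycle_window n c j = [seq d (dwin k x (j + i)) | i <- iota 0 n].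
Proof.
case=> _ _ ex hj; apply/eq_in_map => i; rewrite mem_iota => hi.
by rewrite ex //; lia.
Qed.

(* Equal words force equal positions (by vertex-disjointness) and then,
   by permutivity, equal prefixes. *)
Lemma admissible_words_distinct w1 w2 x1 x2 j1 j2 :
  0 < size c -> left_permutive d -> right_permutive d -> vertex_disjoint n c ->
  admissible n d c w1 x1 -> admissible n d c w2 x2 ->
  j1 < size c -> j2 < size c -> xword n k x1 j1 = xword n k x2 j2 ->
  w1 = w2 /\ j1 = j2.
Proof.
move=> hc Hl Hr vd a1 a2 hj1 hj2 ew.
have shift i : i < n + k -> nth false x1 (j1 + i) = nth false x2 (j2 + i).
  by move=> hi; rewrite -(nth_xword x1 _ hi) -(nth_xword x2 _ hi) ew.
have ej : j1 = j2.
  apply: (vertex_disjoint_inj vd hj1 hj2).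
  rewrite (cycle_window_admissible a1 hj1) (cycle_window_admissible a2 hj2).
  apply/eq_in_map => i; rewrite mem_iota => hi; congr d.
  by apply: eq_from_tnth => t; rewrite !tnth_dwin -!addnA shift //; have := ltn_ord t; lia.
subst j2; split => //.
apply: (admissible_prefix_eq a1 a2 hc Hl Hr (a := j1)); first by lia.
by move=> p hp; rewrite -(subnKC (_ : j1 <= p)) ?shift //; lia.
Qed.

End Admissible.

Theorem permutive_propD n k (d : k.+1.-tuple bool -> bool) :
  left_permutive d -> right_permutive d -> propD n d.
Proof.
move=> Hl Hr c hc vd; split=> [w sw|w1 w2 x1 x2 j1 j2 _ _ a1 a2].
  have ax := extend_admissible n Hr hc sw.
  exists (extend d c w (size c + n - 1)); split=> // y ay.
  exact: (admissible_unique ax ay hc Hr).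
exact: (admissible_words_distinct hc Hl Hr vd a1 a2).
Qed.

Section Necessity.
Variables (n k : nat) (d : k.+1.-tuple bool -> bool).
Hypotheses (n_gt0 : 0 < n) (HD : propD n d).

Lemma size_take_init (t : k.+1.-tuple bool) : size (take k t) = k.
Proof. by rewrite size_takel // size_tuple. Qed.

Lemma prefix_letter c (t : k.+1.-tuple bool) x p :
  admissible n d c (take k t) x -> p < k -> nth false x p = nth false t p.
Proof. by case=> _ tx _ hp; rewrite -(nth_take false hp) tx nth_take. Qed.

Lemma prefix_window c (t : k.+1.-tuple bool) x :
  admissible n d c (take k t) x -> agree_init t (dwin k x 0).
Proof. by move=> ax i hi; rewrite tnth_dwin add0n (prefix_letter ax hi) (tnth_nth false). Qed.

(* Cycles of length 1: fixing the first k arguments, d takes both values. *)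
Lemma propD_right_permutive : right_permutive d.
Proof.
have flip t : exists u, agree_init t u /\ d u = ~~ d t.
  have [ex _] := HD (c := [:: ~~ d t]) erefl erefl.
  have [x [ax _]] := ex _ (size_take_init t).
  exists (dwin k x 0); split; first exact: prefix_window ax.
  by case: ax => _ _ ex0; rewrite ex0 //=; lia.
move=> t t' Htt' edt.
have [u [Htu du]] := flip t.
have Ht'u : agree_init t' u := agree_init_trans (agree_init_sym Htt') Htu.
have last_neq s : agree_init s u -> d s = d t -> tnth s ord_max != tnth u ord_max.
  move=> Hsu ds; apply/eqP => e; move: du.
  by rewrite -(eq_tuple_init Hsu e) ds; case: (d t).
move: (last_neq t Htu erefl) (last_neq t' Ht'u (esym edt)).
by case: (tnth t _); case: (tnth t' _); case: (tnth u _).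
Qed.

Lemma vertex_disjoint_pair b : vertex_disjoint n [:: b; ~~ b].
Proof.
by case: n n_gt0 => // m _; rewrite /vertex_disjoint /cycle_window /= andbT inE; case: b.
Qed.

(* The cycle [b, ~b]: two admissible sequences whose prefixes differ only in
   the first letter produce the same word at position 1, so by distinctness
   their first letters coincide. *)
Lemma propD_left_permutive : 0 < k -> left_permutive d.
Proof.
move=> k_gt0 t u Htu edt.
pose c := [:: d t; ~~ d t].
have c_size : 0 < size c by [].
have [ex distinct] := HD (c := c) isT (vertex_disjoint_pair (d t)).
have [x1 [a1 _]] := ex _ (size_take_init t).
have [x2 [a2 _]] := ex _ (size_take_init u).
have Hr := propD_right_permutive.
have next_letter s x : d s = d t -> admissible n d c (take k s) x ->
    nth false x k = tnth s ord_max.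
  move=> ds ax; have [_ _ ex0] := ax.
  have := Hr _ _ (agree_init_sym (prefix_window ax)); rewrite tnth_dwin.
  by apply; rewrite ex0 ?ds //; lia.
have agree1 : agree_on x1 x2 1 (1 + k).
  move=> p hp; case: (ltnP p k) => hpk.
    rewrite (prefix_letter a1 hpk) (prefix_letter a2 hpk) !(nth_tnth _ (leqW hpk)).
    by rewrite Htu //=; lia.
  have -> : p = k by lia.
  by rewrite (next_letter t) // (next_letter u) // Htu.
have eword : xword n k x1 1 = xword n k x2 1.
  apply: xword_agree_on; first by rewrite (size_admissible c_size a1) (size_admissible c_size a2).
  by apply: agree_on_sub (agree_forward a1 a2 Hr _ agree1) => //=; lia.
have [ew _] := distinct _ _ _ _ 1 1 (size_take_init t) (size_take_init u) a1 a2 isT isT eword.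
by rewrite !(tnth_nth false) /= -(nth_take false k_gt0) ew nth_take.
Qed.

End Necessity.

Theorem propD_permutive n k (d : k.+1.-tuple bool -> bool) : 0 < n -> 0 < k ->
  propD n d <-> left_permutive d /\ right_permutive d.
Proof.
move=> hn hk; split=> [HD|[Hl Hr]]; last exact: permutive_propD.
by split; [exact: (propD_left_permutive hn HD hk) | exact: (propD_right_permutive hn HD)].
Qed.

Theorem mainTheorem4 (n k : nat) (hn : 1 <= n) (hk : 1 <= k)
    (d : k.+1.-tuple bool -> bool) :
  propD n d <->
  exists h : k.-1.-tuple bool -> bool,
    forall x : k.+1.-tuple bool,
      d x = tnth x ord0 (+) h [tuple nth false x i.+1 | i < k.-1] (+) tnth x ord_max.
Proof.
apply: (iff_trans (propD_permutive d hn hk)); split.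
  by case=> Hl Hr; exact: permutive_normal_form.
by case=> h Hd; exact: normal_form_permutive Hd.
Qed.
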